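(* Let $(\mathfrak g,\triangleright)$ be a post-Lie algebra and $\phi:\mathcal U(\overline{\mathfrak g})\to\mathcal U_\ast(\mathfrak g)$ the Hopf algebra isomorphism extending the identity of $V$. For all $n\ge1$ and $x_1,\dots,x_n\in\mathfrak g$, $$\phi(x_1.\,x_2.\,\cdots.\,x_n)=x_1\phi(x_2.\,\cdots.\,x_n)+x_1\triangleright\phi(x_2.\,\cdots.\,x_n)$$ (with $\phi(\mathbf 1)=\mathbf 1$), and consequently $$\phi(x_1.\,\cdots.\,x_n)=x_1\ast\cdots\ast x_n=\sum_{\pi\in P_n}X_\pi .$$ Here $P_n$ is the set of all set partitions of $\{1,\dots,n\}$; for $\pi=\{\pi_1,\dots,\pi_m\}$ the blocks are ordered so that $\max\pi_1<\max\pi_2<\dots<\max\pi_m$; for a block $\pi_i=\{k_1<k_2<\dots<k_l\}$ one sets $x(\pi_i):=x_{k_1}\triangleright(x_{k_2}\triangleright(\cdots\triangleright(x_{k_{l-1}}\triangleright x_{k_l})\cdots))\in\mathfrak g$; and $X_\pi:=x(\pi_1)x(\pi_2)\cdots x(\pi_m)$, the product taken in $\mathcal U(\mathfrak g)$.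
   Context: All vector spaces are finite dimensional over $\mathbb K=\mathbb R$ or $\mathbb C$. A (left) post-Lie algebra is a Lie algebra $\mathfrak g=(V,[\cdot,\cdot])$ with a bilinear product $\triangleright:V\otimes V\to V$ such that for all $x,y,z$: $x\triangleright[y,z]=[x\triangleright y,z]+[y,x\triangleright z]$ and $[x,y]\triangleright z=a_\triangleright(x,y,z)-a_\triangleright(y,x,z)$, where $a_\triangleright(x,y,z)=x\triangleright(y\triangleright z)-(x\triangleright y)\triangleright z$. The bracket $[[x,y]]:=x\triangleright y-y\triangleright x+[x,y]$ is a Lie bracket; $\overline{\mathfrak g}:=(V,[[\cdot,\cdot]])$, and the product of $\mathcal U(\overline{\mathfrak g})$ is written $A.\,B$. $\mathcal U(\mathfrak g)$ denotes the universal enveloping algebra with its usual cocommutative Hopf structure (product written as concatenation, unit $\mathbf 1$, elements of $\mathfrak g$ primitive, counit $\epsilon$); Sweedler notation $\Delta A=A_{(1)}\otimes A_{(2)}$. The post-Lie product extends uniquely to a bilinear product $\triangleright$ on $\mathcal U(\mathfrak g)$ such that, for $A,B,C\in\mathcal U(\mathfrak g)$, $x\in\mathfrak g$: $\mathbf 1\triangleright A=A$, $A\triangleright\mathbf 1=\epsilon(A)\mathbf 1$, $xA\triangleright B=x\triangleright(A\triangleright B)-(x\triangleright A)\triangleright B$, $A\triangleright BC=(A_{(1)}\triangleright B)(A_{(2)}\triangleright C)$. Define $A\ast B:=A_{(1)}(A_{(2)}\triangleright B)$; $\mathcal U_\ast(\mathfrak g):=(\mathcal U(\mathfrak g),\ast,\mathbf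 1,\Delta,\epsilon)$ is a Hopf algebra. It is known that the identity map $\overline{\mathfrak g}\to\mathfrak g$ extends uniquely to a Hopf algebra isomorphism $\phi:\mathcal U(\overline{\mathfrak g})\to\mathcal U_\ast(\mathfrak g)$ (in particular an algebra morphism, so $\phi(x_1.\,\cdots.\,x_n)=x_1\ast\cdots\ast x_n$). *)

From HB Require Import structures.
From mathcomp Require Import all_boot all_order all_algebra.
Set Implicit Arguments. Unset Strict Implicit. Unset Printing Implicit Defensive.
Import Order.TTheory GRing.Theory Num.Theory.
Local Open Scope ring_scope.

Section PostLieDefs.
Variable K : fieldType.

Definition is_linear (A B : lmodType K) (f : A -> B) : Prop :=
  forall (a : K) (u v : A), f (a *: u + v) = a *: f u + f v.

Definition is_bilinear (A B C : lmodType K) (f : A -> B -> C) : Prop :=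
  (forall (a : K) (u v : A) (w : B), f (a *: u + v) w = a *: f u w + f v w) /\
  (forall (a : K) (u : A) (v w : B), f u (a *: v + w) = a *: f u v + f u w).

Definition is_lie_bracket (V : lmodType K) (br : V -> V -> V) : Prop :=
  is_bilinear br /\ (forall x, br x x = 0) /\
  (forall x y z, br x (br y z) + br y (br z x) + br z (br x y) = 0).

Definition assoc_tri (V : lmodType K) (tri : V -> V -> V) (x y z : V) : V :=
  tri x (tri y z) - tri (tri x y) z.

Definition is_post_lie (V : lmodType K) (br tri : V -> V -> V) : Prop :=
  is_lie_bracket br /\ is_bilinear tri /\
  (forall x y z, tri x (br y z) = br (tri x y) z + br y (tri x z)) /\
  (forall x y z, tri (br x y) z = assoc_tri tri x y z - assoc_tri tri y x z).

Definition postlie_bracket (V : lmodType K) (br tri : V -> V -> V) (x y : V) : V :=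
  tri x y - tri y x + br x y.

Definition is_alg_morph (U A : algType K) (f : U -> A) : Prop :=
  is_linear f /\ f 1 = 1 /\ (forall u v, f (u * v) = f u * f v).

Definition is_enveloping (V : lmodType K) (br : V -> V -> V)
    (U : algType K) (iota : V -> U) : Prop :=
  is_linear iota /\
  (forall x y, iota (br x y) = iota x * iota y - iota y * iota x) /\
  (forall (A : algType K) (f : V -> A), is_linear f ->
     (forall x y, f (br x y) = f x * f y - f y * f x) ->
     exists F : U -> A, [/\ is_alg_morph F, (forall x, F (iota x) = f x) &
        forall G : U -> A, is_alg_morph G -> (forall x, G (iota x) = f x) ->
          forall u, G u = F u]).

(* Sweedler notation: cop A is a list of pairs (A_(1), A_(2)) representing
   Delta A = \sum A_(1) (x) A_(2); sums over it are only used against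
   bilinear maps, hence are well defined in U (x) U. *)
Definition sweedler (U : algType K) (cop : U -> seq (U * U))
    (f : U -> U -> U) (A : U) : U :=
  \sum_(p <- cop A) f p.1 p.2.

(* cop represents the usual coproduct of U(g): the algebra morphism
   U -> U (x) U with Delta(x) = x (x) 1 + 1 (x) x for x in g. *)
Definition is_coproduct (V : lmodType K) (U : algType K) (iota : V -> U)
    (cop : U -> seq (U * U)) : Prop :=
  forall f : U -> U -> U, is_bilinear f ->
  [/\ (forall (a : K) (A B : U),
          sweedler cop f (a *: A + B) = a *: sweedler cop f A + sweedler cop f B),
      sweedler cop f 1 = f 1 1,
      (forall x, sweedler cop f (iota x) = f (iota x) 1 + f 1 (iota x)) &
      (forall A B, sweedler cop f (A * B) =
         \sum_(p <- cop A) \sum_(q <- cop B) f (p.1 * q.1) (p.2 * q.2))].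

Definition is_counit (V : lmodType K) (U : algType K) (iota : V -> U)
    (eps : U -> K) : Prop :=
  [/\ forall (a : K) (A B : U), eps (a *: A + B) = a * eps A + eps B,
      eps 1 = 1, (forall A B, eps (A * B) = eps A * eps B) &
      forall x, eps (iota x) = 0].

Definition is_postlie_extension (V : lmodType K) (tri : V -> V -> V)
    (U : algType K) (iota : V -> U) (cop : U -> seq (U * U)) (eps : U -> K)
    (trU : U -> U -> U) : Prop :=
  is_bilinear trU /\
  (forall x y, trU (iota x) (iota y) = iota (tri x y)) /\
  (forall A, trU 1 A = A) /\
  (forall A, trU A 1 = eps A *: 1) /\
  (forall x A B, trU (iota x * A) B = trU (iota x) (trU A B) - trU (trU (iota x) A) B) /\
  (forall A B C, trU A (B * C) = \sum_(p <- cop A) trU p.1 B * trU p.2 C).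

Definition star (U : algType K) (cop : U -> seq (U * U)) (trU : U -> U -> U)
    (A B : U) : U :=
  \sum_(p <- cop A) p.1 * trU p.2 B.

Fixpoint star_word (U : algType K) (cop : U -> seq (U * U)) (trU : U -> U -> U)
    (s : seq U) : U :=
  match s with
  | [::] => 1
  | [:: a] => a
  | a :: s' => star cop trU a (star_word cop trU s')
  end.

(* phi : U(gbar) -> U_*(g) is the algebra morphism extending the identity of V
   (it is unique by the universal property of U(gbar)). *)
Definition is_phi (V : lmodType K) (U Ub : algType K) (iota : V -> U)
    (iotab : V -> Ub) (cop : U -> seq (U * U)) (trU : U -> U -> U)
    (phi : Ub -> U) : Prop :=
  [/\ is_linear phi, phi 1 = 1,
      (forall A B, phi (A * B) = star cop trU (phi A) (phi B)) &
      forall x, phi (iotab x) = iota x].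

Fixpoint tri_word (V : lmodType K) (tri : V -> V -> V) (s : seq V) : V :=
  match s with
  | [::] => 0
  | [:: v] => v
  | v :: s' => tri v (tri_word tri s')
  end.

Section Partitions.
Variable n : nat.

Definition block_max (B : {set 'I_n}) : nat := \max_(i in B) (nat_of_ord i).

Definition block_elems (B : {set 'I_n}) : seq 'I_n :=
  sort (fun i j : 'I_n => (i <= j)%N) (enum B).

Definition ordered_blocks (P : {set {set 'I_n}}) : seq {set 'I_n} :=
  sort (fun B C => (block_max B <= block_max C)%N) (enum P).

Definition x_block (V : lmodType K) (tri : V -> V -> V) (x : 'I_n -> V)
    (B : {set 'I_n}) : V :=
  tri_word tri [seq x i | i <- block_elems B].

Definition X_part (V : lmodType K) (tri : V -> V -> V) (U : algType K)
    (iota : V -> U) (x : 'I_n -> V) (P : {set {set 'I_n}}) : U :=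
  \prod_(B <- ordered_blocks P) iota (x_block tri x B).

End Partitions.
End PostLieDefs.

(* Because [iota a] is primitive, the product of U_*(g) satisfies
   [star (iota a) B = iota a * B + trU (iota a) B], and [trU (iota a)] is a
   derivation of U(g).  As [phi] maps products of U(gbar) to [star]-products, the
   first identity follows, and iterating it gives the [star]-word.
   The partition formula is proved by induction on n: a partition of [0..n] is a
   partition of [1..n] together with either the singleton block {0} or the block
   that 0 joins.  Since 0 is the least index, the singleton comes first among the
   blocks ordered by maxima, and joining 0 to a block B replaces x(B) by
   x_0 |> x(B) without changing the order of the blocks.  With
   Phi = phi (x_1 . ... . x_n), the two kinds of terms are therefore
   [iota x_0 * Phi] and the Leibniz expansion of [trU (iota x_0) Phi]. *)

From HB Require Import structures.
From mathcomp Require Import all_boot all_order all_algebra.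
Import GRing.Theory.
Set Implicit Arguments. Unset Strict Implicit. Unset Printing Implicit Defensive.

Lemma partition_setTP (T : finType) (P : {set {set T}}) :
  reflect [/\ set0 \notin P, forall i, exists2 B, B \in P & i \in B &
              forall A B i, A \in P -> B \in P -> i \in A -> i \in B -> A = B]
          (partition P [set: T]).
Proof.
apply: (iffP and3P) => [[/eqP covP /trivIsetP tiP P0] | [P0 covP uniqP]].
  split=> // [i | A B i AP BP iA iB].
    have /bigcupP[B BP iB] : i \in cover P by rewrite covP inE.
    by exists B.
  case: (eqVneq A B) => // /(tiP A B AP BP); rewrite -setI_eq0.
  by move/eqP/setP/(_ i); rewrite !inE iA iB.
split=> //.
  by apply/eqP/setP=> i; rewrite inE; have [B BP iB] := covP i; apply/bigcupP; exists B.
apply/trivIsetP=> A B AP BP; apply: contraNT; rewrite -setI_eq0 => /set0Pn[i].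
by rewrite inE => /andP[iA iB]; rewrite (uniqP A B i).
Qed.

Lemma partition_neq0 (T : finType) (P : {set {set T}}) (B : {set T}) :
  partition P [set: T] -> B \in P -> B != set0.
Proof. by case/partition_setTP=> P0 _ _ BP; apply: contraNneq P0 => <-. Qed.

Lemma partition_card0 (T : finType) (P : {set {set T}}) :
  #|T| = 0%N -> partition P [set: T] = (P == set0).
Proof.
move=> T0; have all0 (B : {set T}) : B = set0 by apply/setP=> i; have := card0_eq T0 i.
apply/partition_setTP/eqP=> [[P0 _ _]|->].
  by apply/setP=> B; rewrite inE (all0 B) (negbTE P0).
by split=> [|i|]; [rewrite inE | have := card0_eq T0 i | move=> A B i; rewrite inE].
Qed.

Lemma mem_map_imset (T1 T2 : finType) (f : T1 -> T2) (s : seq T1) (A : {set T1}) :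
  s =i A -> map f s =i f @: A.
Proof.
by move=> sA y; apply/mapP/imsetP=> -[z zs ->]; exists z; rewrite ?sA // -sA.
Qed.

Lemma sort_eq_sorted (T : eqType) (r : rel T) (s t : seq T) :
  {in s &, total r} -> {in s & &, transitive r} -> {in s &, antisymmetric r} ->
  perm_eq s t -> sorted r t -> sort r s = t.
Proof.
move=> r_total r_trans r_anti st t_sorted.
rewrite (perm_sort_inP t r_total r_trans r_anti st).
apply: (sorted_sort_in (P := mem s)) => //.
by apply/allP=> y; rewrite -(perm_mem st); apply.
Qed.

Lemma block_elemsE n (B : {set 'I_n}) (s : seq 'I_n) :
  uniq s -> s =i B -> sorted (fun i j : 'I_n => (i <= j)%N) s -> block_elems B = s.
Proof.
move=> s_uniq sB s_sorted; apply: sort_eq_sorted => //.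
- by move=> i j _ _; apply: leq_total.
- by move=> j i k _ _ _; apply: leq_trans.
- by move=> i j _ _ /anti_leq/val_inj.
by apply: uniq_perm; rewrite ?enum_uniq // => i; rewrite mem_enum sB.
Qed.

Lemma mem_block_elems n (B : {set 'I_n}) : block_elems B =i B.
Proof. by move=> i; rewrite mem_sort mem_enum. Qed.

Lemma mem_ordered_blocks n (P : {set {set 'I_n}}) : ordered_blocks P =i P.
Proof. by move=> B; rewrite mem_sort mem_enum. Qed.

Lemma block_max_mem n (B : {set 'I_n}) :
  B != set0 -> exists2 i, i \in B & nat_of_ord i = block_max B.
Proof.
rewrite -card_gt0 => /(eq_bigmax_cond (fun i : 'I_n => nat_of_ord i))[i iB e].
by exists i.
Qed.

Lemma ordered_blocksE n (P : {set {set 'I_n}}) (s : seq {set 'I_n}) :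
  partition P [set: 'I_n] -> uniq s -> s =i P ->
  sorted (fun B C => (block_max B <= block_max C)%N) s -> ordered_blocks P = s.
Proof.
move=> partP s_uniq sP s_sorted; apply: sort_eq_sorted => //.
- by move=> B C _ _; apply: leq_total.
- by move=> C B D _ _ _; apply: leq_trans.
- move=> B C; rewrite !mem_enum => BP CP /anti_leq eqBC.
  have [i iB ei] := block_max_mem (partition_neq0 partP BP).
  have [j jC ej] := block_max_mem (partition_neq0 partP CP).
  have eij : i = j by apply: val_inj; rewrite /= ei ej eqBC.
  by case/partition_setTP: partP => _ _ /(_ B C i BP CP iB); apply; rewrite eij.
by apply: uniq_perm; rewrite ?enum_uniq // => B; rewrite mem_enum sP.
Qed.

(** * Partitions of ['I_n.+1] as extensions of partitions of ['I_n] *)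

Section LiftOrd0.
Variable n : nat.
Local Notation shift := (@lift n.+1 ord0).

Definition lift_set (B : {set 'I_n}) : {set 'I_n.+1} := shift @: B.
Definition unlift_set (A : {set 'I_n.+1}) : {set 'I_n} := shift @^-1: A.

Definition lift_block (c : bool) (B : {set 'I_n}) : {set 'I_n.+1} :=
  if c then ord0 |: lift_set B else lift_set B.

Lemma mem_lift_block_shift c B j : (shift j \in lift_block c B) = (j \in B).
Proof.
rewrite /lift_block /lift_set.
by case: c; rewrite ?inE (mem_imset _ _ (@lift_inj _ ord0)) // eq_sym (negbTE (neq_lift _ _)).
Qed.

Lemma mem_lift_block0 c B : (ord0 \in lift_block c B) = c.
Proof.
rewrite /lift_block; case: c; rewrite ?inE ?eqxx //.
by apply/imsetP=> -[j _ /eqP]; rewrite (negbTE (neq_lift _ _)).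
Qed.

Lemma lift_blockK c : cancel (lift_block c) unlift_set.
Proof. by move=> B; apply/setP=> j; rewrite inE mem_lift_block_shift. Qed.

Lemma unlift_setK (A : {set 'I_n.+1}) : lift_block (ord0 \in A) (unlift_set A) = A.
Proof.
apply/setP=> i; case: (unliftP ord0 i) => [j ->|->].
  by rewrite mem_lift_block_shift inE.
by rewrite mem_lift_block0.
Qed.

Lemma lift_block_set0 c : lift_block c set0 = if c then [set ord0] else set0.
Proof. by rewrite /lift_block /lift_set imset0 setU0; case: c. Qed.

Lemma unlift_set1 : unlift_set [set ord0] = set0.
Proof. by rewrite -(lift_block_set0 true) lift_blockK. Qed.

Lemma unlift_set_neq0 (A : {set 'I_n.+1}) :
  A != set0 -> A != [set ord0] -> unlift_set A != set0.
Proof.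
move=> A0 A1; apply/eqP=> eA; move: A0 A1.
by rewrite -(unlift_setK A) eA lift_block_set0; case: (ord0 \in A); rewrite eqxx.
Qed.

(* A partition of [0..n] is encoded by the partition of [1..n] it induces,
   together with the block that [0] is glued to ([None] when [{0}] is a block). *)
Definition block_choice (P : {set {set 'I_n}}) (o : option {set 'I_n}) : bool :=
  if o is Some b then b \in P else true.

Definition extend_partition (P : {set {set 'I_n}}) (o : option {set 'I_n}) :
  {set {set 'I_n.+1}} :=
  if o is Some b then [set lift_block (B == b) B | B in P]
  else [set ord0] |: [set lift_block false B | B in P].

Definition restrict_partition (Q : {set {set 'I_n.+1}}) : {set {set 'I_n}} :=
  [set unlift_set A | A in Q] :\ set0.

Definition ord0_block_choice (Q : {set {set 'I_n.+1}}) : option {set 'I_n} :=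
  if [set ord0] \in Q then None else Some (unlift_set (pblock Q ord0)).

Section Extend.
Variable P : {set {set 'I_n}}.
Hypothesis partP : partition P [set: 'I_n].

Lemma lift_block_notin_set0 (f : {set 'I_n} -> bool) :
  set0 \notin [set lift_block (f B) B | B in P].
Proof.
case/partition_setTP: partP => P0 _ _; apply/imsetP=> -[B BP /(congr1 unlift_set)].
by rewrite lift_blockK /unlift_set preimset0 => eB; rewrite eB BP in P0.
Qed.

Lemma lift_block_notin_set1 (f : {set 'I_n} -> bool) :
  [set ord0] \notin [set lift_block (f B) B | B in P].
Proof.
case/partition_setTP: partP => P0 _ _; apply/imsetP=> -[B BP /(congr1 unlift_set)].
by rewrite lift_blockK unlift_set1 => eB; rewrite eB BP in P0.
Qed.

Lemma extend_partitionP o :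
  block_choice P o -> partition (extend_partition P o) [set: 'I_n.+1].
Proof.
case/partition_setTP: partP => P0 covP uniqP.
have lift_cov (f : {set 'I_n} -> bool) j :
    exists2 A, A \in [set lift_block (f B) B | B in P] & shift j \in A.
  have [B BP jB] := covP j.
  by exists (lift_block (f B) B); [exact: imset_f | rewrite mem_lift_block_shift].
have lift_uniq (f : {set 'I_n} -> bool) A C j :
    A \in [set lift_block (f B) B | B in P] -> C \in [set lift_block (f B) B | B in P] ->
    shift j \in A -> shift j \in C -> A = C.
  move=> /imsetP[B BP ->] /imsetP[B' B'P ->]; rewrite !mem_lift_block_shift => jB jB'.
  by rewrite (uniqP B B' j).
case: o => [b bP | _]; apply/partition_setTP; split.
- exact: lift_block_notin_set0.
- move=> i; case: (unliftP ord0 i) => [j ->|->]; first exact: lift_cov.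
  exists (lift_block true b); last by rewrite mem_lift_block0.
  by apply/imsetP; exists b; rewrite ?eqxx.
- move=> A C i AP CP; case: (unliftP ord0 i) => [j ->|->].
    exact: (lift_uniq (fun B => B == b)).
  move: AP CP => /imsetP[B BP ->] /imsetP[B' B'P ->].
  by rewrite !mem_lift_block0 => /eqP-> /eqP->.
- rewrite in_setU1 negb_or lift_block_notin_set0 andbT.
  by apply/eqP=> /setP/(_ ord0); rewrite !inE eqxx.
- move=> i; case: (unliftP ord0 i) => [j ->|->].
    by have [A AP jA] := lift_cov (fun=> false) j; exists A; rewrite // inE AP orbT.
  by exists [set ord0]; rewrite ?setU11 ?set11.
- move=> A C i /setU1P[->|AP] /setU1P[->|CP] //.
  + by move/set1P=> ->; case/imsetP: CP => B _ ->; rewrite mem_lift_block0.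
  + by move=> + /set1P eiC; rewrite eiC; case/imsetP: AP => B _ ->; rewrite mem_lift_block0.
  case: (unliftP ord0 i) => [j ->|->]; first exact: (lift_uniq (fun=> false)).
  by case/imsetP: AP => B _ ->; rewrite mem_lift_block0.
Qed.

Lemma restrict_extend_partition o :
  block_choice P o -> restrict_partition (extend_partition P o) = P.
Proof.
have unlift_lift_blocks (f : {set 'I_n} -> bool) :
    [set unlift_set A | A in [set lift_block (f B) B | B in P]] = P.
  by rewrite -imset_comp (eq_imset _ (fun B => lift_blockK (f B) B)) imset_id.
have P0 : set0 \notin P by case/partition_setTP: partP.
case: o => [b|] _; rewrite /restrict_partition /extend_partition.
  rewrite (unlift_lift_blocks (fun B => B == b)).
  by apply/setDidPl; rewrite disjoint_sym disjoints1.
by rewrite imsetU1 (unlift_lift_blocks (fun=> false)) unlift_set1 setU1K.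
Qed.

Lemma ord0_block_choice_extend o :
  block_choice P o -> ord0_block_choice (extend_partition P o) = o.
Proof.
move=> Po; rewrite /ord0_block_choice; case: o Po => [b bP|_]; last by rewrite setU11.
rewrite (negbTE (lift_block_notin_set1 _)); congr Some.
rewrite (@def_pblock _ _ (lift_block true b)) ?lift_blockK ?mem_lift_block0 //.
  by case/and3P: (extend_partitionP (o := Some b) bP).
by apply/imsetP; exists b; rewrite ?eqxx.
Qed.

End Extend.

Section Restrict.
Variable Q : {set {set 'I_n.+1}}.
Hypothesis partQ : partition Q [set: 'I_n.+1].

Lemma unlift_block_neq0 A : A \in Q -> A != [set ord0] -> unlift_set A != set0.
Proof. by move=> AQ; apply: unlift_set_neq0; apply: partition_neq0 partQ AQ. Qed.

Lemma unlift_block_inj A C : A \in Q -> C \in Q -> unlift_set A != set0 ->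
  unlift_set A = unlift_set C -> A = C.
Proof.
move=> AQ CQ /set0Pn[j jA] eAC; have jC : j \in unlift_set C by rewrite -eAC.
rewrite !inE in jA jC.
by case/partition_setTP: partQ => _ _ /(_ A C (shift j) AQ CQ jA jC).
Qed.

Lemma restrict_partitionP : partition (restrict_partition Q) [set: 'I_n].
Proof.
case/partition_setTP: partQ => _ covQ uniqQ; apply/partition_setTP; split.
- by rewrite !inE eqxx.
- move=> j; have [C CQ jC] := covQ (shift j); exists (unlift_set C); last by rewrite inE.
  by rewrite !inE imset_f // andbT; apply/set0Pn; exists j; rewrite inE.
move=> A B j /setD1P[_ /imsetP[C CQ ->]] /setD1P[_ /imsetP[C' C'Q ->]].
by rewrite !inE => jC jC'; rewrite (uniqQ C C' (shift j)).
Qed.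

Lemma ord0_block_choiceP : block_choice (restrict_partition Q) (ord0_block_choice Q).
Proof.
rewrite /block_choice /ord0_block_choice; case: ifPn => // Q1.
have covQ : ord0 \in cover Q by case/and3P: partQ => /eqP-> _ _; rewrite inE.
rewrite !inE imset_f ?pblock_mem // andbT unlift_block_neq0 ?pblock_mem //.
by apply: contraNneq Q1 => <-; rewrite pblock_mem.
Qed.

Lemma extend_restrict_partition :
  extend_partition (restrict_partition Q) (ord0_block_choice Q) = Q.
Proof.
have [trivQ covQ] : trivIset Q /\ ord0 \in cover Q.
  by case/and3P: partQ => /eqP covQ trivQ _; rewrite covQ inE.
rewrite /ord0_block_choice /restrict_partition; case: ifPn => Q1 /=.
  rewrite -{1}(setD1K Q1) imsetU1 unlift_set1 setU1K; last first.
    apply/imsetP=> -[A /setD1P[A1 AQ] eA].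
    by move: (unlift_block_neq0 AQ A1); rewrite -eA eqxx.
  rewrite -imset_comp -[RHS](setD1K Q1); congr (_ |: _).
  rewrite -[RHS]imset_id; apply: eq_in_imset => A /setD1P[A1 AQ].
  have A0 : ord0 \in A = false.
    apply/negbTE/negP=> A0; move: A1.
    by rewrite -(def_pblock trivQ Q1 (set11 ord0)) (def_pblock trivQ AQ A0) eqxx.
  by rewrite -[RHS]unlift_setK A0.
rewrite (_ : _ :\ _ = [set unlift_set A | A in Q]); last first.
  apply/setDidPl; rewrite disjoint_sym disjoints1; apply/imsetP=> -[A AQ eA].
  have A1 : A != [set ord0] by apply: contraNneq Q1 => <-.
  by move: (unlift_block_neq0 AQ A1); rewrite -eA eqxx.
rewrite -imset_comp -[RHS]imset_id; apply: eq_in_imset => A AQ /=.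
have b0Q := pblock_mem covQ.
suff -> : (unlift_set A == unlift_set (pblock Q ord0)) = (ord0 \in A).
  by rewrite unlift_setK.
apply/eqP/idP=> [/unlift_block_inj -> //|A0]; last by rewrite (def_pblock trivQ AQ A0).
- by rewrite mem_pblock.
- by rewrite unlift_block_neq0 //; apply: contraNneq Q1 => <-.
Qed.

End Restrict.
End LiftOrd0.

Section LiftOrder.
Variable n : nat.
Local Notation shift := (@lift n.+1 ord0).
Local Notation le_max := (fun B C => (block_max B <= block_max C)%N).

Lemma block_max_lift_block c (B : {set 'I_n}) :
  B != set0 -> block_max (lift_block c B) = (block_max B).+1.
Proof.
move=> B0; have [i iB ei] := block_max_mem B0.
apply/anti_leq/andP; split.
  apply/bigmax_leqP=> k; case: (unliftP ord0 k) => [j ->|-> //].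
  by rewrite mem_lift_block_shift lift0 ltnS => jB; apply: leq_bigmax_cond.
rewrite -ei -(lift0 i); apply: (leq_bigmax_cond (F := fun k : 'I_n.+1 => nat_of_ord k)).
by rewrite mem_lift_block_shift.
Qed.

Lemma block_max_set1 : block_max [set @ord0 n] = 0%N.
Proof. by rewrite /block_max big_set1. Qed.

Lemma sorted_lift_blocks (P : {set {set 'I_n}}) (f : {set 'I_n} -> bool) :
  partition P [set: 'I_n] ->
  sorted le_max [seq lift_block (f B) B | B <- ordered_blocks P].
Proof.
move=> partP; rewrite sorted_map; apply: (@sub_in_sorted _ (mem P) le_max).
- by move=> B C BP CP; rewrite /= !block_max_lift_block ?(partition_neq0 partP).
- by apply/allP=> B; rewrite mem_ordered_blocks.
- by apply: sort_sorted => B C; apply: leq_total.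
Qed.

Lemma ordered_blocks_extend P o :
  partition P [set: 'I_n] -> block_choice P o ->
  ordered_blocks (extend_partition P o) =
  if o is Some b then [seq lift_block (B == b) B | B <- ordered_blocks P]
  else [set ord0] :: [seq lift_block false B | B <- ordered_blocks P].
Proof.
move=> partP Po; have ePs := mem_ordered_blocks P.
have uniq_lift (f : {set 'I_n} -> bool) :
    uniq [seq lift_block (f B) B | B <- ordered_blocks P].
  by rewrite (map_inj_uniq (can_inj (fun B => lift_blockK (f B) B))) sort_uniq enum_uniq.
apply: ordered_blocksE; first exact: extend_partitionP.
- case: o {Po} => [b|]; rewrite ?cons_uniq uniq_lift ?andbT //.
  by rewrite (mem_map_imset _ ePs) (lift_block_notin_set1 partP (fun=> false)).
- move=> A; rewrite /extend_partition.
  by case: o {Po} => [b|]; rewrite ?in_cons ?in_setU1 (mem_map_imset _ ePs).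
case: o {Po} => [b|]; first exact: sorted_lift_blocks.
have := sorted_lift_blocks (fun=> false) partP.
rewrite /= path_sortedE => [->|]; last by move=> ???; apply: leq_trans.
by rewrite andbT; apply/allP=> B _; rewrite /= block_max_set1.
Qed.

Lemma block_elems_lift_block c (B : {set 'I_n}) :
  block_elems (lift_block c B) =
  if c then ord0 :: map shift (block_elems B) else map shift (block_elems B).
Proof.
have eB := mem_block_elems B.
have ord0_shift : ord0 \notin map shift (block_elems B).
  by apply/mapP=> -[j _ /eqP]; rewrite (negbTE (neq_lift _ _)).
have sorted_shift : sorted (fun i j : 'I_n.+1 => (i <= j)%N) (map shift (block_elems B)).
  rewrite sorted_map; apply: (@sub_sorted _ (fun i j : 'I_n => (i <= j)%N)).
    by move=> i j /=; rewrite /bump.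
  by apply: sort_sorted => i j; apply: leq_total.
apply: block_elemsE.
- have uniq_shift := map_inj_uniq (@lift_inj _ ord0) (block_elems B).
  by case: c; rewrite /= uniq_shift sort_uniq enum_uniq ?ord0_shift.
- move=> i; case: (unliftP ord0 i) => [j ->|->].
    by case: c; rewrite ?in_cons (mem_map (@lift_inj _ ord0)) mem_lift_block_shift eB.
  by rewrite mem_lift_block0; case: c; rewrite ?inE ?eqxx // (negbTE ord0_shift).
case: c => //=; rewrite path_sortedE; last by move=> ???; apply: leq_trans.
by rewrite sorted_shift andbT; apply/allP.
Qed.

Lemma block_elems_set1 : block_elems [set @ord0 n] = [:: ord0].
Proof. by apply: block_elemsE => // i; rewrite !inE. Qed.

End LiftOrder.

Local Open Scope ring_scope.

Lemma tri_word_cons (K : fieldType) (V : lmodType K) (tri : V -> V -> V) v s :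
  s != [::] -> tri_word tri (v :: s) = tri v (tri_word tri s).
Proof. by case: s. Qed.

Section PartitionSum.
Variables (K : fieldType) (V : lmodType K) (tri : V -> V -> V).
Variables (U : algType K) (iota : V -> U).
Variables (n : nat) (x : 'I_n.+1 -> V).
Local Notation x' := (fun j : 'I_n => x (lift ord0 j)).

Lemma x_block_lift_block c (B : {set 'I_n}) : B != set0 ->
  x_block tri x (lift_block c B) =
  if c then tri (x ord0) (x_block tri x' B) else x_block tri x' B.
Proof.
move=> B0; rewrite /x_block block_elems_lift_block.
case: c; rewrite -?map_comp // [map _ (_ :: _)]/= tri_word_cons -?map_comp //.
rewrite -size_eq0 !size_map size_eq0; apply: contra_neq B0 => eB.
by apply/setP=> j; rewrite inE -mem_block_elems eB.
Qed.

Lemma X_part_extend_None (P : {set {set 'I_n}}) : partition P [set: 'I_n] ->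
  X_part tri iota x (extend_partition P None) = iota (x ord0) * X_part tri iota x' P.
Proof.
move=> partP; rewrite /X_part ordered_blocks_extend // big_cons big_map.
rewrite /x_block block_elems_set1; congr (_ * _); apply: eq_big_seq => B.
rewrite mem_ordered_blocks => BP.
by rewrite -/(x_block _ _ _) x_block_lift_block ?(partition_neq0 partP).
Qed.

Lemma X_part_extend_Some (P : {set {set 'I_n}}) b :
  partition P [set: 'I_n] -> b \in P ->
  X_part tri iota x (extend_partition P (Some b)) =
  \prod_(B <- ordered_blocks P)
     iota (if B == b then tri (x ord0) (x_block tri x' B) else x_block tri x' B).
Proof.
move=> partP bP; rewrite /X_part ordered_blocks_extend // big_map.
apply: eq_big_seq => B; rewrite mem_ordered_blocks => BP.
by rewrite x_block_lift_block ?(partition_neq0 partP).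
Qed.

Lemma sum_partitions_ord_recl :
  \sum_(Q : {set {set 'I_n.+1}} | partition Q [set: 'I_n.+1]) X_part tri iota x Q =
  iota (x ord0) * (\sum_(P : {set {set 'I_n}} | partition P [set: 'I_n]) X_part tri iota x' P)
  + \sum_(P : {set {set 'I_n}} | partition P [set: 'I_n]) \sum_(b in P)
      \prod_(B <- ordered_blocks P)
        iota (if B == b then tri (x ord0) (x_block tri x' B) else x_block tri x' B).
Proof.
pose extend (j : {set {set 'I_n}} * option {set 'I_n}) := extend_partition j.1 j.2.
pose restrict (Q : {set {set 'I_n.+1}}) := (restrict_partition Q, ord0_block_choice Q).
rewrite (reindex_onto extend restrict) => [|Q partQ]; last first.
  exact: extend_restrict_partition.
rewrite (eq_bigl (fun j => partition j.1 [set: 'I_n] && block_choice j.1 j.2)); last first.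
  move=> [P o] /=; apply/andP/andP=> [[partQ /eqP[eP eo]]|[partP Po]].
    have := restrict_partitionP partQ; have := ord0_block_choiceP partQ.
    by rewrite eP eo.
  split; first exact: extend_partitionP.
  by rewrite /restrict restrict_extend_partition ?ord0_block_choice_extend.
rewrite -(@pair_big_dep _ _ _ _ _ (fun P => partition P [set: 'I_n]) (@block_choice n)
            (fun P o => X_part tri iota x (extend_partition P o))) /=.
rewrite mulr_sumr -big_split; apply: eq_bigr => P partP.
rewrite (bigD1 None) //= X_part_extend_None //; congr (_ + _).
rewrite (reindex_onto Some (odflt set0)) => [|[]//].
apply: eq_big => [b|b /andP[/andP[bP _] _]]; last exact: X_part_extend_Some.
by rewrite /= eqxx !andbT.
Qed.

End PartitionSum.

(** * The extended product with a generator *)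

Section ExtendedProduct.
Variables (K : fieldType) (V : lmodType K) (tri : V -> V -> V).
Variables (U : algType K) (iota : V -> U) (cop : U -> seq (U * U)) (eps : U -> K).
Variable trU : U -> U -> U.
Hypothesis Hcop : is_coproduct iota cop.
Hypothesis Heps : is_counit iota eps.
Hypothesis HtrU : is_postlie_extension tri iota cop eps trU.

Lemma trUDr u : {morph trU u : A B / A + B}.
Proof.
by move=> A B; case: HtrU => [[_ trU_linr] _]; have := trU_linr 1 u A B; rewrite !scale1r.
Qed.

Lemma trU0r u : trU u 0 = 0.
Proof. by apply: (addrI (trU u 0)); rewrite -trUDr !addr0. Qed.

Lemma trU_sumr u I (r : seq I) (P : pred I) (F : I -> U) :
  trU u (\sum_(i <- r | P i) F i) = \sum_(i <- r | P i) trU u (F i).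
Proof. exact: (big_morph _ (trUDr u) (trU0r u)). Qed.

Lemma sum_cop_iota (f : U -> U -> U) a : is_bilinear f ->
  \sum_(p <- cop (iota a)) f p.1 p.2 = f (iota a) 1 + f 1 (iota a).
Proof. by case/Hcop=> _ _ + _; apply. Qed.

Lemma trU_1l A : trU 1 A = A.
Proof. by case: HtrU => _ [_ []]. Qed.

Lemma star_iotal a B : star cop trU (iota a) B = iota a * B + trU (iota a) B.
Proof.
case: HtrU => [[trU_linl _] _].
rewrite /star (sum_cop_iota (f := fun u v => u * trU v B)) ?trU_1l ?mul1r //.
by split=> c u v w; rewrite ?trU_linl; [rewrite mulrDl scalerAl | rewrite mulrDr scalerAr].
Qed.

(* [iota a] is primitive, so [trU (iota a)] is a derivation of [U]. *)
Lemma trU_iotaM a A B :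
  trU (iota a) (A * B) = trU (iota a) A * B + A * trU (iota a) B.
Proof.
case: HtrU => [[trU_linl _] [_ [_ [_ [_ trU_mulr]]]]].
rewrite trU_mulr (sum_cop_iota (f := fun u v => trU u A * trU v B)) ?trU_1l //.
split=> c u v w; rewrite trU_linl ?mulrDl ?mulrDr.
  by rewrite scalerAl.
by rewrite scalerAr.
Qed.

Lemma trU_iota1 a : trU (iota a) 1 = 0.
Proof.
case: HtrU => [_ [_ [_ [trU_r1 _]]]]; case: Heps => _ _ _ eps_iota.
by rewrite trU_r1 eps_iota scale0r.
Qed.

Lemma trU_iota_iota a v : trU (iota a) (iota v) = iota (tri a v).
Proof. by case: HtrU => [_ []]. Qed.

Lemma trU_iota_prod a (T : eqType) (s : seq T) (g : T -> V) : uniq s ->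
  trU (iota a) (\prod_(B <- s) iota (g B)) =
  \sum_(b <- s) \prod_(B <- s) iota (if B == b then tri a (g B) else g B).
Proof.
elim: s => [|c s IHs] /=; first by rewrite !big_nil trU_iota1.
case/andP=> cs s_uniq; rewrite !big_cons trU_iotaM trU_iota_iota IHs // eqxx.
congr (_ * _ + _).
  by apply: eq_big_seq => B Bs; case: eqP => // eBc; rewrite -eBc Bs in cs.
rewrite mulr_sumr; apply: eq_big_seq => b bs; rewrite big_cons.
by case: eqP => // ecb; rewrite ecb bs in cs.
Qed.

End ExtendedProduct.

Section Phi.
Variables (K : fieldType) (V : lmodType K) (tri : V -> V -> V).
Variables (U Ub : algType K) (iota : V -> U) (iotab : V -> Ub).
Variables (cop : U -> seq (U * U)) (eps : U -> K) (trU : U -> U -> U) (phi : Ub -> U).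
Hypothesis Hcop : is_coproduct iota cop.
Hypothesis Heps : is_counit iota eps.
Hypothesis HtrU : is_postlie_extension tri iota cop eps trU.
Hypothesis Hphi : is_phi iota iotab cop trU phi.

Lemma phi_prod_ord_recl n (x : 'I_n.+1 -> V) :
  phi (\prod_(i < n.+1) iotab (x i)) =
  iota (x ord0) * phi (\prod_(i < n) iotab (x (lift ord0 i)))
  + trU (iota (x ord0)) (phi (\prod_(i < n) iotab (x (lift ord0 i)))).
Proof.
by case: Hphi => _ _ phiM phi_iota; rewrite big_ord_recl phiM phi_iota (star_iotal Hcop HtrU).
Qed.

Lemma phi_prod_star_word n (x : 'I_n.+1 -> V) :
  phi (\prod_(i < n.+1) iotab (x i)) = star_word cop trU [seq iota (x i) | i <- enum 'I_n.+1].
Proof.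
case: Hphi => _ _ phiM phi_iota; elim: n x => [|n IHn] x.
  by rewrite big_ord_recl big_ord0 mulr1 phi_iota enum_ordSl enum_ord0.
rewrite big_ord_recl phiM phi_iota IHn [enum 'I_n.+2]enum_ordSl /= -map_comp.
by rewrite [enum 'I_n.+1]enum_ordSl.
Qed.

Lemma phi_prod_partitions n (x : 'I_n -> V) :
  phi (\prod_(i < n) iotab (x i)) =
  \sum_(P : {set {set 'I_n}} | partition P [set: 'I_n]) X_part tri iota x P.
Proof.
elim: n x => [|n IHn] x.
  case: Hphi => _ phi1 _ _; rewrite big_ord0 phi1.
  rewrite (eq_bigl (pred1 set0)) => [|P]; last exact: partition_card0 (card_ord 0).
  by rewrite big_pred1_eq /X_part /ordered_blocks enum_set0 big_nil.
rewrite phi_prod_ord_recl !IHn sum_partitions_ord_recl; congr (_ + _).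
rewrite (trU_sumr HtrU); apply: eq_bigr => P _.
rewrite /X_part (trU_iota_prod Hcop Heps HtrU) ?sort_uniq ?enum_uniq // -big_enum.
by apply: perm_big; rewrite perm_sort.
Qed.

End Phi.

Theorem mainTheorem2
  (K : fieldType) (V : vectType K) (br tri : V -> V -> V)
  (Hpl : is_post_lie br tri)
  (U : algType K) (iota : V -> U) (HU : is_enveloping br iota)
  (Ub : algType K) (iotab : V -> Ub)
  (HUb : is_enveloping (postlie_bracket br tri) iotab)
  (cop : U -> seq (U * U)) (Hcop : is_coproduct iota cop)
  (eps : U -> K) (Heps : is_counit iota eps)
  (trU : U -> U -> U) (HtrU : is_postlie_extension tri iota cop eps trU)
  (phi : Ub -> U) (Hphi : is_phi iota iotab cop trU phi)
  (n : nat) (x : 'I_n.+1 -> V) :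
  [/\ phi (\prod_(i < n.+1) iotab (x i)) =
        iota (x ord0) * phi (\prod_(i < n) iotab (x (lift ord0 i)))
        + trU (iota (x ord0)) (phi (\prod_(i < n) iotab (x (lift ord0 i)))),
      phi (\prod_(i < n.+1) iotab (x i)) =
        star_word cop trU [seq iota (x i) | i <- enum 'I_n.+1] &
      phi (\prod_(i < n.+1) iotab (x i)) =
        \sum_(P : {set {set 'I_n.+1}} | partition P [set: 'I_n.+1])
           X_part tri iota x P].
Proof.
split.
- exact (phi_prod_ord_recl Hcop HtrU Hphi x).
- exact (phi_prod_star_word Hphi x).
- exact (phi_prod_partitions Hcop Heps HtrU Hphi x).
Qed.
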